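(* Let $G$ be a multiplicative monoid with identity, let $N$ be a $G$-graded near-ring and let $P$ be a graded weakly prime ideal of $N$ with $P^2=\{0\}$. If $I$ is a graded ideal of $N$ with $I^2\subseteq P$, then $I^2=\{0\}$.
   Context: A near-ring $(N,+,\cdot)$ is a set with two binary operations such that $(N,+)$ is a group (not necessarily abelian), $(N,\cdot)$ is a semigroup, and $(a+b)y = ay+by$ for all $a,b,y\in N$. For a multiplicative monoid $G$ with identity, $N$ is a $G$-graded near-ring if there is a family $\{N_\sigma\}_{\sigma\in G}$ of additive normal subgroups of $N$ with $N=\bigoplus_{\sigma\in G}N_\sigma$ and $N_\sigma N_\tau\subseteq N_{\sigma\tau}$. An ideal $P$ of $N$ is graded if $P=\bigoplus_{\sigma}(P\cap N_\sigma)$. For ideals $I,J$, $IJ$ denotes their product and $I^2=II$. A graded ideal $P$ is graded weakly prime if for all graded ideals $I,J$ with $\{0\}\neq IJ\subseteq P$, either $I\subseteq P$ or $J\subseteq P$. *)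

From Stdlib Require Import List.
Import ListNotations.
Set Implicit Arguments.

(* A (right) near-ring: (N,+) a group (not necessarily abelian),
   (N,.) a semigroup, and (a+b)y = ay + by. *)
Record NearRing := {
  nr_car :> Type;
  nr_add : nr_car -> nr_car -> nr_car;
  nr_zero : nr_car;
  nr_opp : nr_car -> nr_car;
  nr_mul : nr_car -> nr_car -> nr_car;
  nr_addA : forall a b c, nr_add a (nr_add b c) = nr_add (nr_add a b) c;
  nr_add0l : forall a, nr_add nr_zero a = a;
  nr_add0r : forall a, nr_add a nr_zero = a;
  nr_addNl : forall a, nr_add (nr_opp a) a = nr_zero;
  nr_addNr : forall a, nr_add a (nr_opp a) = nr_zero;
  nr_mulA : forall a b c, nr_mul a (nr_mul b c) = nr_mul (nr_mul a b) c;
  nr_mulDl : forall a b y, nr_mul (nr_add a b) y = nr_add (nr_mul a y) (nr_mul b y)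
}.

Record Monoid := {
  mon_car :> Type;
  mon_op : mon_car -> mon_car -> mon_car;
  mon_one : mon_car;
  mon_opA : forall a b c, mon_op a (mon_op b c) = mon_op (mon_op a b) c;
  mon_op1l : forall a, mon_op mon_one a = a;
  mon_op1r : forall a, mon_op a mon_one = a
}.

Section NearRingDefs.
Variable N : NearRing.
Local Notation "a + b" := (nr_add N a b).
Local Notation "- a" := (nr_opp N a).
Local Notation "0" := (nr_zero N).
Local Notation "a * b" := (nr_mul N a b).

Definition subset (A B : N -> Prop) : Prop := forall x, A x -> B x.

Definition is_zero_set (A : N -> Prop) : Prop := forall x, A x <-> x = 0.

Definition normal_subgroup (S : N -> Prop) : Prop :=
  S 0 /\ (forall x y, S x -> S y -> S (x + y)) /\ (forall x, S x -> S (- x)) /\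
  (forall n x, S x -> S ((n + x) + - n)).

(* ideal of a (right) near-ring (Pilz): normal subgroup I with
   IN <= I and n(n'+i) - nn' in I. *)
Definition ideal (I : N -> Prop) : Prop :=
  normal_subgroup I /\ (forall i n, I i -> I (i * n)) /\
  (forall n n' i, I i -> I (n * (n' + i) + - (n * n'))).

Definition prodset (I J : N -> Prop) : N -> Prop :=
  fun x => exists a b, I a /\ J b /\ x = a * b.

Definition lsum (l : list N) : N := fold_right (fun a b => a + b) 0 l.

(* The internal direct sum is expressed as: every element
   is a finite sum of homogeneous components with pairwise distinct degrees,
   and such a sum is 0 only if all components are 0. *)
Definition graded (G : Monoid) (Ns : G -> N -> Prop) : Prop :=
  (forall s, normal_subgroup (Ns s)) /\
  (forall s t x y, Ns s x -> Ns t y -> Ns (mon_op G s t) (x * y)) /\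
  (forall x, exists l : list (G * N),
      NoDup (map fst l) /\ Forall (fun p => Ns (fst p) (snd p)) l /\
      x = lsum (map snd l)) /\
  (forall l : list (G * N),
      NoDup (map fst l) -> Forall (fun p => Ns (fst p) (snd p)) l ->
      lsum (map snd l) = 0 -> Forall (fun p => snd p = 0) l).

Definition graded_ideal (G : Monoid) (Ns : G -> N -> Prop) (P : N -> Prop) : Prop :=
  ideal P /\
  (forall x, P x -> exists l : list (G * N),
      NoDup (map fst l) /\ Forall (fun p => Ns (fst p) (snd p) /\ P (snd p)) l /\
      x = lsum (map snd l)).

Definition graded_weakly_prime (G : Monoid) (Ns : G -> N -> Prop) (P : N -> Prop) : Prop :=
  @graded_ideal G Ns P /\
  (forall I J, @graded_ideal G Ns I -> @graded_ideal G Ns J ->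
     ~ is_zero_set (prodset I J) -> subset (prodset I J) P ->
     subset I P \/ subset J P).

End NearRingDefs.

(* If I^2 <> {0}, weak primeness of P applied to I * I ⊆ P gives I ⊆ P, hence
   I^2 ⊆ P^2 = {0}; since 0 = 0 * 0 lies in I^2, this forces I^2 = {0} anyway. *)

From Stdlib Require Import Classical.

Lemma nr_mul0l (N : NearRing) (y : N) : nr_mul N (nr_zero N) y = nr_zero N.
Proof.
  pose (z := nr_mul N (nr_zero N) y). fold z.
  assert (Hzz : z = nr_add N z z).
  { unfold z. rewrite <- nr_mulDl, nr_add0l. reflexivity. }
  transitivity (nr_add N (nr_add N (nr_opp N z) z) z).
  - rewrite nr_addNl, nr_add0l. reflexivity.
  - rewrite <- nr_addA, <- Hzz. apply nr_addNl.
Qed.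

Section NearRingSubsets.
Variable N : NearRing.

Lemma ideal_has0 (I : N -> Prop) : ideal N I -> I (nr_zero N).
Proof. intros [[H0 _] _]. exact H0. Qed.

Lemma prodset_has0 (I J : N -> Prop) :
  I (nr_zero N) -> J (nr_zero N) -> prodset N I J (nr_zero N).
Proof.
  intros HI HJ. exists (nr_zero N), (nr_zero N).
  repeat split; auto. symmetry. apply nr_mul0l.
Qed.

Lemma prodset_subset (I J P Q : N -> Prop) :
  subset N I P -> subset N J Q -> subset N (prodset N I J) (prodset N P Q).
Proof.
  intros HIP HJQ x (a & b & Ha & Hb & ->).
  exists a, b. auto.
Qed.

Lemma zero_set_subset (A B : N -> Prop) :
  A (nr_zero N) -> is_zero_set N B -> subset N A B -> is_zero_set N A.
Proof.
  intros HA0 HB HAB x. split.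
  - intros Hx. apply HB, HAB, Hx.
  - intros ->. exact HA0.
Qed.

End NearRingSubsets.

Theorem theorem6 (G : Monoid) (N : NearRing) (Ns : G -> N -> Prop)
  (HN : @graded N G Ns) (P : N -> Prop) (HP : @graded_weakly_prime N G Ns P)
  (HP2 : @is_zero_set N (@prodset N P P))
  (I : N -> Prop) (HI : @graded_ideal N G Ns I)
  (HI2 : @subset N (@prodset N I I) P) :
  @is_zero_set N (@prodset N I I).
Proof.
  destruct (classic (is_zero_set N (prodset N I I))) as [HI2zero | HI2nonzero].
  - exact HI2zero.
  - destruct HP as [_ HPprime].
    assert (HIP : subset N I P)
      by (destruct (HPprime I I HI HI HI2nonzero HI2); assumption).
    assert (HI0 : I (nr_zero N)) by (apply ideal_has0, HI).
    apply zero_set_subset with (B := prodset N P P).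
    + apply prodset_has0; exact HI0.
    + exact HP2.
    + apply prodset_subset; exact HIP.
Qed.
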